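(* Let $W_{4,n}$ be the $4$-regular Kn\''odel graph. If $n\in\{16,18,28,36\}$, then $W_{4,n}$ is $\gamma$-stable.
   Context: For an even integer $n\ge 2$ and $1\le\Delta\le\lfloor\log_2 n\rfloor$, the Kn\''odel graph $W_{\Delta,n}$ is the $\Delta$-regular bipartite graph on the $n$ vertices $(i,j)$, $i\in\{1,2\}$, $0\le j\le n/2-1$, in which for every $j$ the vertex $(1,j)$ is adjacent to the vertices $(2,(j+2^k-1)\bmod (n/2))$ for $k=0,1,\dots,\Delta-1$ (and there are no other edges). A set $D$ of vertices of a graph $G$ is dominating if every vertex not in $D$ is adjacent to a vertex of $D$; $\gamma(G)$ is the minimum size of a dominating set. A graph $G$ is $\gamma$-stable if $\gamma(G-u)=\gamma(G)$ for every vertex $u$ of $G$, where $G-u$ is the graph obtained by deleting $u$. *)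

From mathcomp Require Import all_boot.
Set Implicit Arguments. Unset Strict Implicit. Unset Printing Implicit Defensive.

(* Simple graphs: a finite vertex type T with an adjacency relation e.
   A subgraph induced on a vertex set S is handled by passing S. *)

Definition dominating (T : finType) (e : rel T) (S D : {set T}) : bool :=
  (D \subset S) && [forall v in S, (v \notin D) ==> [exists w in D, e v w]].

(* Domination number of the subgraph induced on S (S itself always dominates). *)
Definition gamma (T : finType) (e : rel T) (S : {set T}) : nat :=
  #|[arg min_(D < S | dominating e S D) #|D|]|.

Definition gamma_stable (T : finType) (e : rel T) : Prop :=
  forall u : T, gamma e ([set: T] :\ u) = gamma e [set: T].

(* Knodel graph W_{Delta,n}: vertices (i,j), i in {1,2} encoded as 'I_2 = {0,1},
   0 <= j <= n/2 - 1.  (1,j) ~ (2, (j + 2^k - 1) mod (n/2)) for k < Delta. *)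
Definition knodel_vertex (n : nat) := ('I_2 * 'I_(n./2))%type.

Definition knodel_arc (Delta n : nat) (x y : knodel_vertex n) : bool :=
  [&& nat_of_ord x.1 == 0, nat_of_ord y.1 == 1 &
      [exists k : 'I_Delta, nat_of_ord y.2 == (x.2 + 2 ^ k - 1) %% n./2]].

Definition knodel_adj (Delta n : nat) : rel (knodel_vertex n) :=
  fun x y => knodel_arc Delta x y || knodel_arc Delta y x.

From mathcomp Require Import all_boot.
Set Implicit Arguments. Unset Strict Implicit.

(* Stability is established by exact computation.  For each of the four graphs
   a certificate fixes g and shows, for the whole graph and for every
   vertex-deleted subgraph, that a branch-and-bound search finds a dominating set
   with g + 1 vertices but none with g.  The search is complete because some
   vertex of any dominating set covers the first undominated vertex, and it may
   prune as soon as the undominated vertices outnumber what k closed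
   neighbourhoods, each of size at most Delta + 1, can cover. *)

Section Domination.
Variables (T : finType) (e : rel T) (S : {set T}).

Lemma dominatingP (D : {set T}) :
  reflect (D \subset S /\ forall x, x \in S -> exists2 w, w \in D & (x == w) || e x w)
          (dominating e S D).
Proof.
apply: (iffP andP) => -[sDS cov]; split=> //.
  move=> x xS; have [xD | xnD] := boolP (x \in D); first by exists x; rewrite ?eqxx.
  have /exists_inP [w wD exw] := implyP (forall_inP cov x xS) xnD.
  by exists w; rewrite // exw orbT.
apply/forall_inP => x xS; apply/implyP => xnD.
have [w wD /orP [/eqP xw | exw]] := cov x xS; first by rewrite xw wD in xnD.
by apply/exists_inP; exists w.
Qed.

Lemma dominating_self : dominating e S S.
Proof. by apply/dominatingP; split=> // x xS; exists x; rewrite ?eqxx. Qed.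

Lemma gamma_le_card (D : {set T}) : dominating e S D -> gamma e S <= #|D|.
Proof.
by rewrite /gamma; case: arg_minnP => [|D0 _ minD0]; [exact: dominating_self | apply: minD0].
Qed.

Lemma gamma_ge k : (forall D, dominating e S D -> k <= #|D|) -> k <= gamma e S.
Proof.
by rewrite /gamma; case: arg_minnP => [|D0 domD0 _]; [exact: dominating_self | apply].
Qed.

End Domination.

Fixpoint first_some (A B : Type) (f : A -> option B) (s : seq A) : option B :=
  if s is a :: s' then (if f a is Some b then Some b else first_some f s') else None.

Lemma first_some_none (A : eqType) B (f : A -> option B) s :
  first_some f s = None -> {in s, forall a, f a = None}.
Proof.
elim: s => [|a s IHs] //=; case fa: (f a) => [//|] /IHs fs_none x.
by rewrite inE => /orP [/eqP -> | /fs_none].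
Qed.

Lemma first_some_some (A : eqType) B (f : A -> option B) s b :
  first_some f s = Some b -> exists2 a, a \in s & f a = Some b.
Proof.
elim: s => [|a s IHs] //=; case fa: (f a) => [b'|].
  by case=> <-; exists a; rewrite ?mem_head.
by case/IHs => x xs fx; exists x; rewrite // inE xs orbT.
Qed.

Section DominationSearch.
Variables (T : finType) (e adj : rel T) (vs : seq T) (deg : nat).
Hypothesis adjE : adj =2 e.
Hypothesis mem_vs : forall x, x \in vs.

Definition covers (w x : T) : bool := (x == w) || adj x w.

Hypothesis count_covers_le : forall w, count (covers w) vs <= deg.

Lemma coversE w x : covers w x = (x == w) || e x w.
Proof. by rewrite /covers adjE. Qed.

Fixpoint dom_search (P : pred T) (k : nat) (U : seq T) {struct k} : option (seq T) :=
  if U is v :: _ then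
    if deg * k < size U then None else
    if k is k'.+1 then
      first_some (fun w => omap (cons w) (dom_search P k' [seq x <- U | ~~ covers w x]))
                 [seq w <- vs | P w && covers w v]
    else None
  else Some [::].

Lemma size_covered_le (D : {set T}) U :
  (forall x, x \in U -> exists2 w, w \in D & covers w x) ->
  size U <= \sum_(w in D) count (covers w) U.
Proof.
elim: U => [|x U IHU] //= covU; rewrite big_split /= -add1n leq_add //.
  by have [w wD cwx] := covU x (mem_head _ _); rewrite (bigD1 w) //= cwx.
by apply: IHU => y yU; apply: covU; rewrite inE yU orbT.
Qed.

Lemma dom_search_some P k U D : dom_search P k U = Some D ->
  [/\ all P D, size D <= k & forall x, x \in U -> exists2 w, w \in D & covers w x].
Proof.
elim: k U D => [|k IHk] [|v U] D /=.
- by case=> <-.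
- by case: ifP.
- by case=> <-.
case: ifP => // _ search_some; have [w] := first_some_some search_some.
rewrite mem_filter => /andP [/andP [Pw cwv] _].
rewrite cwv /=; case sD': (dom_search P k _) => [D'|] //= [<-].
have [PD' sizeD' covD'] := IHk _ _ sD'.
split=> //=; first by rewrite Pw.
move=> x; rewrite inE => /orP [/eqP -> | xU]; first by exists w; rewrite ?mem_head.
have [cwx | ncwx] := boolP (covers w x); first by exists w; rewrite ?mem_head.
have [|w' w'D' cw'x] := covD' x; first by rewrite mem_filter ncwx.
by exists w'; rewrite // inE w'D' orbT.
Qed.

Lemma dom_search_none P k U : subseq U vs -> dom_search P k U = None ->
  forall D : {set T}, {in D, forall w, P w} ->
  (forall x, x \in U -> exists2 w, w \in D & covers w x) -> k < #|D|.
Proof.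
elim: k U => [|k IHk] [|v U] //= sUvs.
  by move=> _ D _ covU; have [w wD _] := covU v (mem_head _ _); apply/card_gt0P; exists w.
case: ifP => [too_big _ D _ covU | _ search_none D PD covU].
  have: size (v :: U) <= deg * #|D|.
    rewrite (leq_trans (size_covered_le covU)) // mulnC -sum_nat_const leq_sum // => w _.
    exact: leq_trans (leq_count_subseq _ sUvs) (count_covers_le w).
  by move/(leq_trans too_big); rewrite ltn_mul2l => /andP [].
have [w wD cwv] := covU v (mem_head _ _).
have : w \in [seq w <- vs | P w && covers w v] by rewrite mem_filter PD ?cwv ?mem_vs.
move/(first_some_none search_none); rewrite cwv /=.
case sD': (dom_search P k _) => [//|] _.
rewrite (cardsD1 w) wD add1n ltnS; apply: IHk sD' _ _ _.
- apply: subseq_trans sUvs.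
  exact: subseq_trans (filter_subseq _ _) (subseq_cons _ _).
- by move=> x; rewrite in_setD1 => /andP [_ /PD].
move=> x; rewrite mem_filter => /andP [ncwx xU].
have [w' w'D cw'x] := covU x (mem_behead (s := v :: U) xU).
by exists w' => //; rewrite in_setD1 w'D andbT; apply: contraNneq ncwx => <-.
Qed.

Definition gamma_certificate (P : pred T) (g : nat) : bool :=
  let U := [seq x <- vs | P x] in
  isSome (dom_search P g.+1 U) && ~~ isSome (dom_search P g U).

Lemma gamma_certified (S : {set T}) P g :
  (forall x, (x \in S) = P x) -> gamma_certificate P g -> gamma e S = g.+1.
Proof.
move=> SP /andP [].
case sD: (dom_search _ _ _) => [D|] // _; case snone: (dom_search _ _ _) => // _.
have [PD sizeD covD] := dom_search_some sD.
have covS x : x \in S -> exists2 w, w \in D & covers w x.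
  by move=> xS; apply: covD; rewrite mem_filter -SP xS mem_vs.
apply/eqP; rewrite eqn_leq; apply/andP; split.
  apply: leq_trans (gamma_le_card (D := [set x in D]) _) _.
    apply/dominatingP; split.
      by apply/subsetP => x; rewrite inE SP => /(allP PD).
    by move=> x /covS [w wD cwx]; exists w; rewrite ?inE // -coversE.
  by rewrite cardsE (leq_trans (card_size D)).
apply: gamma_ge => D0 /dominatingP [/subsetP sD0S covD0].
apply: (dom_search_none (filter_subseq _ _) snone) => [w /sD0S | x]; first by rewrite SP.
rewrite mem_filter -SP => /andP [/covD0 [w wD0 cwx] _].
by exists w; rewrite // coversE.
Qed.

Lemma gamma_stable_certified g :
  gamma_certificate predT g -> all (fun u => gamma_certificate (predC1 u) g) vs ->
  gamma_stable e.
Proof.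
move=> certT /allP certD u.
have -> : gamma e [set: T] = g.+1 by apply: gamma_certified certT => x; rewrite inE.
by apply: gamma_certified (certD u (mem_vs u)) => x; rewrite !inE andbT.
Qed.

End DominationSearch.

(* [enum 'I_n] and [exists k : 'I_n, _] do not reduce under [vm_compute]
   ([insub] on ordinals matches on the opaque [idP]), hence the computable
   copies below of the vertex list and of the adjacency relation. *)
Fixpoint ord_seq n : seq 'I_n :=
  if n is n'.+1 then ord0 :: map (lift ord0) (ord_seq n') else [::].

Lemma mem_ord_seq n (x : 'I_n) : x \in ord_seq n.
Proof.
elim: n x => [[] //|n IHn] x /=; rewrite inE.
case: (unliftP ord0 x) => [j -> | ->]; last by rewrite eqxx.
by rewrite mem_map ?IHn ?orbT //; exact: lift_inj.
Qed.

Definition knodel_vertices n : seq (knodel_vertex n) :=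
  [seq (a, b) | a <- ord_seq 2, b <- ord_seq n./2].

Lemma mem_knodel_vertices n (x : knodel_vertex n) : x \in knodel_vertices n.
Proof. by case: x => a b; apply: allpairs_f; apply: mem_ord_seq. Qed.

Definition knodel_arcb (Delta n : nat) (x y : knodel_vertex n) : bool :=
  [&& nat_of_ord x.1 == 0, nat_of_ord y.1 == 1 &
      has (fun k => nat_of_ord y.2 == (x.2 + 2 ^ k - 1) %% n./2) (iota 0 Delta)].

Lemma knodel_arcbE Delta n (x y : knodel_vertex n) :
  knodel_arcb Delta x y = knodel_arc Delta x y.
Proof.
congr [&& _, _ & _]; apply/hasP/existsP => [[k] | [k /eqP y2E]].
  by rewrite mem_iota => /andP [_ lt_kD] /eqP y2E; exists (Ordinal lt_kD); apply/eqP.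
by exists (val k); [rewrite mem_iota ltn_ord | apply/eqP].
Qed.

Definition knodel_adjb (Delta n : nat) : rel (knodel_vertex n) :=
  fun x y => knodel_arcb Delta x y || knodel_arcb Delta y x.

Lemma knodel_adjbE Delta n : @knodel_adjb Delta n =2 @knodel_adj Delta n.
Proof. by move=> x y; rewrite /knodel_adjb /knodel_adj !knodel_arcbE. Qed.

Definition knodel_stable_check (Delta n g : nat) : bool :=
  let adj := @knodel_adjb Delta n in
  let vs := knodel_vertices n in
  [&& all (fun w => count (covers adj w) vs <= Delta.+1) vs,
      gamma_certificate adj vs Delta.+1 predT g &
      all (fun u => gamma_certificate adj vs Delta.+1 (predC1 u) g) vs].

Lemma knodel_gamma_stable_of_check Delta n g :
  knodel_stable_check Delta n g -> gamma_stable (@knodel_adj Delta n).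
Proof.
case/and3P => /allP count_covers_le; apply: gamma_stable_certified.
- exact: knodel_adjbE.
- exact: mem_knodel_vertices.
- by move=> w; apply: count_covers_le; apply: mem_knodel_vertices.
Qed.

(* The certified domination numbers are 4, 4, 7 and 8. *)
Lemma knodel4_16_stable : gamma_stable (@knodel_adj 4 16).
Proof. by apply: (@knodel_gamma_stable_of_check 4 16 3); vm_compute. Qed.

Lemma knodel4_18_stable : gamma_stable (@knodel_adj 4 18).
Proof. by apply: (@knodel_gamma_stable_of_check 4 18 3); vm_compute. Qed.

Lemma knodel4_28_stable : gamma_stable (@knodel_adj 4 28).
Proof. by apply: (@knodel_gamma_stable_of_check 4 28 6); vm_compute. Qed.

Lemma knodel4_36_stable : gamma_stable (@knodel_adj 4 36).
Proof. by apply: (@knodel_gamma_stable_of_check 4 36 7); vm_compute. Qed.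

Theorem lemma4p3 (n : nat) :
  n \in [:: 16; 18; 28; 36] -> gamma_stable (@knodel_adj 4 n).
Proof.
rewrite !inE => /or4P [] /eqP ->.
- exact: knodel4_16_stable.
- exact: knodel4_18_stable.
- exact: knodel4_28_stable.
- exact: knodel4_36_stable.
Qed.
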